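(* Let $\overrightarrow{W}$ be a Morse sequence on a simplicial complex $K$ and let $\sigma,\tau$ be critical simplices of $\overrightarrow{W}$. Then $\sigma\in\widehat{\partial}(\tau)$ if and only if $\tau\in\widehat{\delta}(\sigma)$.
   Context: A simplicial complex $K$ is a finite collection of non-empty finite sets closed under taking non-empty subsets; $\dim\sigma=|\sigma|-1$, $K^{(p)}$ the set of $p$-simplices. A pair $(\sigma,\tau)$ with $\sigma\subsetneq\tau$ is a free pair for $K$ if $\tau$ is the only simplex other than $\sigma$ containing $\sigma$; $K$ is then an elementary expansion of $K\setminus\{\sigma,\tau\}$. If $\nu$ is a facet (maximal simplex) of $K$, $K$ is an elementary filling of $K\setminus\{\nu\}$. A Morse sequence on $K$ is a sequence $\langle\emptyset=K_0,\dots,K_k=K\rangle$ with each $K_i$ an elementary expansion or filling of $K_{i-1}$; simplices added by fillings are critical; for an expansion $K_i=K_{i-1}\cup\{\sigma,\tau\}$, $\sigma\subset\tau$, $(\sigma,\tau)$ is a regular pair, $\sigma$ lower regular, $\tau$ upper regular. $K[p]$ is the $\mathbb{Z}_2$-vector space of subsets of $K^{(p)}$ (sum = symmetric difference, $0=\emptyset$); $\partial(\sigma)=\{\tau\in K^{(p-1)}:\tau\subset\sigma\}$, $\delta(\sigma)=\{\tau\in K^{(p+1)}:\sigma\subset\tau\}$, extended linearly to chains. The reference map $\curlywedge$ is the unique map assigning to each $p$-simplex a set of critical $p$-simplices, extended linearly (mod 2) to chains, with $\curlywedge(\nu)=\{\nu\}$ for critical $\nu$ and $\curlywedge(\tau)=0=\curlywedge(\partial(\tau))$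 for upper regular $\tau$; the coreference map $\curlyvee$ is the unique such map with $\curlyvee(\nu)=\{\nu\}$ for critical $\nu$ and $\curlyvee(\sigma)=0=\curlyvee(\delta(\sigma))$ for lower regular $\sigma$. For a critical $p$-simplex $\nu$, $\widehat{\partial}(\nu)=\curlywedge(\partial(\nu))$ and $\widehat{\delta}(\nu)=\curlyvee(\delta(\nu))$. *)

From mathcomp Require Import all_boot.

Set Implicit Arguments.
Unset Strict Implicit.
Unset Printing Implicit Defensive.

Section Defs.
Variable V : finType.
Notation simplex := {set V}.
Notation complex := {set {set V}}.

Definition simplicial_complex (K : complex) : Prop :=
  forall s, s \in K -> s != set0 /\
    (forall t : simplex, t != set0 -> t \subset s -> t \in K).

Definition free_pair (K : complex) (s t : simplex) : Prop :=
  [/\ s \in K, t \in K, s \proper t &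
      forall r, r \in K -> s \subset r -> r = s \/ r = t].

Definition facet (K : complex) (nu : simplex) : Prop :=
  nu \in K /\ forall r, r \in K -> nu \subset r -> r = nu.

(* A step of a Morse sequence: an elementary filling adding the facet nu,
   or an elementary expansion adding the free pair (s,t). *)
Inductive step : Type :=
| Fill of simplex
| Expand of simplex & simplex.

Definition added (st : step) : complex :=
  match st with Fill nu => [set nu] | Expand s t => [set s; t] end.

Definition complex_of (W : seq step) : complex :=
  \bigcup_(st <- W) added st.

(* W is a Morse sequence on K: K_i := complex_of (take i W), K_0 = empty,
   K_k = K, and each K_{i+1} is an elementary filling or an elementary
   expansion of K_i. *)
Definition morse_seq (K : complex) (W : seq step) : Prop :=
  complex_of W = K /\
  forall i, i < size W ->
    let Kp := complex_of (take i W) in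
    let Kn := complex_of (take i.+1 W) in
    simplicial_complex Kn /\
    match nth (Fill set0) W i with
    | Fill nu => nu \notin Kp /\ facet Kn nu
    | Expand s t => [/\ s \notin Kp, t \notin Kp & free_pair Kn s t]
    end.

Definition critical (W : seq step) (nu : simplex) : Prop := exists2 i, i < size W & nth (Fill set0) W i = Fill nu.
Definition lower_regular (W : seq step) (s : simplex) : Prop :=
  exists t, exists2 i, i < size W & nth (Fill set0) W i = Expand s t.
Definition upper_regular (W : seq step) (t : simplex) : Prop :=
  exists s, exists2 i, i < size W & nth (Fill set0) W i = Expand s t.

(* boundary and coboundary (chains are subsets of K^{(p)}); dim = card - 1 *)
Definition bd (K : complex) (s : simplex) : complex :=
  [set r in K | (r \subset s) && (#|r| == #|s|.-1)].
Definition cobd (K : complex) (s : simplex) : complex :=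
  [set r in K | (s \subset r) && (#|r| == #|s|.+1)].

(* Z_2-linear extension of a map on simplices to chains: y lies in the
   image of the chain c iff it lies in f x for an odd number of x in c *)
Definition linext (f : simplex -> complex) (c : complex) : complex :=
  [set y | odd #|[set x in c | y \in f x]|].

Definition is_reference_map (K : complex) (W : seq step)
    (f : simplex -> complex) : Prop :=
  [/\ (forall s, s \in K -> forall y, y \in f s ->
          critical W y /\ #|y| = #|s|),
      (forall nu, nu \in K -> critical W nu -> f nu = [set nu]) &
      (forall t, t \in K -> upper_regular W t ->
          f t = set0 /\ linext f (bd K t) = set0)].

Definition is_coreference_map (K : complex) (W : seq step)
    (g : simplex -> complex) : Prop :=
  [/\ (forall s, s \in K -> forall y, y \in g s ->
          critical W y /\ #|y| = #|s|),
      (forall nu, nu \in K -> critical W nu -> g nu = [set nu]) &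
      (forall s, s \in K -> lower_regular W s ->
          g s = set0 /\ linext g (cobd K s) = set0)].

Definition hbd K (f : simplex -> complex) (nu : simplex) := linext f (bd K nu).
Definition hcobd K (g : simplex -> complex) (nu : simplex) :=
  linext g (cobd K nu).

End Defs.

(* Double counting modulo 2.  Count the pairs (a, b) with b a codimension-one face of a,
   tau in g(a) and sigma in f(b).  Grouped by a, the parity of the row of a
   is [tau in g(a)] * [sigma in f(partial a)]; it vanishes unless a = tau,
   since g(a) = {a} for critical a, g(a) = 0 for lower regular a and
   f(partial a) = 0 for upper regular a.  So the total parity is
   [sigma in hat-partial(tau)].  Grouped by b, the same argument with the
   roles of f and g exchanged gives [tau in hat-delta(sigma)]. *)
From mathcomp Require Import all_boot.

Set Implicit Arguments.
Unset Strict Implicit.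
Unset Printing Implicit Defensive.

Lemma odd_sum_except (I : finType) (i0 : I) (F : I -> nat) :
  (forall i, i != i0 -> ~~ odd (F i)) -> odd (\sum_i F i) = odd (F i0).
Proof.
move=> evenF; rewrite (bigD1 i0) //= oddD.
suff /negbTE -> : ~~ odd (\sum_(i | i != i0) F i) by rewrite addbF.
by elim/big_ind: _ => // m n; rewrite oddD => /negbTE-> /negbTE->.
Qed.

Lemma sum_nat_of_bool (T : finType) (P : pred T) :
  \sum_x (P x : nat) = #|[set x | P x]|.
Proof. by rewrite -sum1dep_card [RHS]big_mkcond. Qed.

Section Complexes.
Variable V : finType.
Implicit Types (K : {set {set V}}) (a b s : {set V}) (W : seq (step V)).

Lemma mem_bd_cobd K a b : simplicial_complex K ->
  (a \in K) && (b \in bd K a) = (b \in K) && (a \in cobd K b).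
Proof.
move=> HK; rewrite !inE; have [aK | _] := boolP (a \in K); last by rewrite andbF.
have [a0 _] := HK a aK; rewrite -card_gt0 in a0.
by case: (b \in K) (b \subset a) => [] [] //=; rewrite (eq_sym #|a|) -eqSS prednK.
Qed.

Lemma critical_mem_complex_of W s : critical W s -> s \in complex_of W.
Proof.
case=> i ltiW Wi; rewrite /complex_of (big_nth (Fill set0)) big_mkord.
by apply/bigcupP; exists (Ordinal ltiW); rewrite //= Wi set11.
Qed.

Lemma mem_complex_ofP W s : s \in complex_of W ->
  [\/ critical W s, lower_regular W s | upper_regular W s].
Proof.
rewrite /complex_of (big_nth (Fill set0)) big_mkord => /bigcupP[[i ltiW] _].
case Wi: (nth _ W i) => [nu | a b] /=.
  by rewrite inE => /eqP->; apply: Or31; exists i.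
by rewrite !inE => /orP[] /eqP->; [apply: Or32; exists b | apply: Or33; exists a]; exists i.
Qed.

Section Incidence.
Variables (K : {set {set V}}) (W : seq (step V)) (f g : {set V} -> {set {set V}}).
Variables sigma tau : {set V}.
Hypothesis HK : simplicial_complex K.
Hypothesis HW : complex_of W = K.
Hypothesis Hf : is_reference_map K W f.
Hypothesis Hg : is_coreference_map K W g.

Definition incident a b : bool :=
  [&& (a \in K) && (b \in bd K a), tau \in g a & sigma \in f b].

Lemma odd_row a :
  odd (\sum_b incident a b) = [&& a \in K, tau \in g a & sigma \in hbd K f a].
Proof.
rewrite /incident; case: (a \in K) (tau \in g a) => [] [] /=;
  try by rewrite big1 // => b; rewrite andbF.
by rewrite sum_nat_of_bool /hbd /linext inE.
Qed.

Lemma odd_column b :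
  odd (\sum_a incident a b) = [&& b \in K, sigma \in f b & tau \in hcobd K g b].
Proof.
under eq_bigr do rewrite /incident mem_bd_cobd // [_ && (sigma \in f b)]andbC andbACA.
case: (b \in K) (sigma \in f b) => [] [] /=;
  try by rewrite big1 // => a; rewrite !andbF.
by rewrite sum_nat_of_bool /hcobd /linext inE.
Qed.

Lemma odd_row_except a : a != tau -> ~~ odd (\sum_b incident a b).
Proof.
have [_ gcrit glow] := Hg; have [_ _ fup] := Hf.
move=> neq_a; rewrite odd_row; apply/and3P => -[aK tga].
have : a \in complex_of W by rewrite HW.
case/mem_complex_ofP => [crit | low | up].
- by move: tga; rewrite gcrit // inE eq_sym (negbTE neq_a).
- by move: tga; rewrite (glow a aK low).1 inE.
- by rewrite /hbd (fup a aK up).2 inE.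
Qed.

Lemma odd_column_except b : b != sigma -> ~~ odd (\sum_a incident a b).
Proof.
have [_ fcrit fup] := Hf; have [_ _ glow] := Hg.
move=> neq_b; rewrite odd_column; apply/and3P => -[bK sfb].
have : b \in complex_of W by rewrite HW.
case/mem_complex_ofP => [crit | low | up].
- by move: sfb; rewrite fcrit // inE eq_sym (negbTE neq_b).
- by rewrite /hcobd (glow b bK low).2 inE.
- by move: sfb; rewrite (fup b bK up).1 inE.
Qed.

End Incidence.
End Complexes.

Theorem theorem3 (V : finType) (K : {set {set V}}) (W : seq (step V))
    (f g : {set V} -> {set {set V}}) (sigma tau : {set V}) :
  simplicial_complex K -> morse_seq K W ->
  is_reference_map K W f -> is_coreference_map K W g ->
  critical W sigma -> critical W tau ->
  (sigma \in hbd K f tau) <-> (tau \in hcobd K g sigma).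
Proof.
move=> HK [HW _] Hf Hg crit_sigma crit_tau.
have [_ fcrit _] := Hf; have [_ gcrit _] := Hg.
have sigmaK : sigma \in K by rewrite -HW critical_mem_complex_of.
have tauK : tau \in K by rewrite -HW critical_mem_complex_of.
have by_rows :
    odd (\sum_a \sum_b incident K f g sigma tau a b) = (sigma \in hbd K f tau).
  by rewrite (odd_sum_except (odd_row_except sigma HW Hf Hg)) odd_row tauK gcrit ?set11.
have by_columns :
    odd (\sum_b \sum_a incident K f g sigma tau a b) = (tau \in hcobd K g sigma).
  by rewrite (odd_sum_except (odd_column_except tau HK HW Hf Hg)) odd_column // sigmaK fcrit ?set11.
by rewrite -by_rows -by_columns exchange_big.
Qed.
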